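(* Let $R$ be a ring and let $M$ be a right $R$-module which is a submodule of a right $R$-module $E$ that is both injective and projective. Then $M$ is subinjective extension-reflecting; that is, for every short exact sequence of right $R$-modules $0\to A\to B\to C\to 0$, if $M\in \underline{\mathfrak{In}}^{-1}(A)\cap \underline{\mathfrak{In}}^{-1}(C)$, then $M\in \underline{\mathfrak{In}}^{-1}(B)$.
   Context: $R$ is an associative ring with identity and modules are unital right $R$-modules. For right $R$-modules $X$ and $Y$, write $X\in \underline{\mathfrak{In}}^{-1}(Y)$ (the subinjectivity domain of $Y$) if $Y$ is $X$-subinjective, i.e., for every module $C$ containing $X$ as a submodule and every homomorphism $f\colon X\to Y$ there is a homomorphism $C\to Y$ whose restriction to $X$ is $f$. *)

(* Right R-modules are modelled as left modules over the
   converse ring R^c (lmodType R^c). *)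
From HB Require Import structures.
From mathcomp Require Import all_boot all_order all_algebra.
Set Implicit Arguments. Unset Strict Implicit. Unset Printing Implicit Defensive.
Import GRing.Theory.
Local Open Scope ring_scope.

Notation rmodType R := (lmodType (R^c)%R).

Definition subinjective (R : pzRingType) (X Y : rmodType R) : Prop :=
  forall (C : rmodType R) (i : {linear X -> C}) (f : {linear X -> Y}),
    injective i ->
    exists g : {linear C -> Y}, forall x : X, g (i x) = f x.

Definition in_subinj_domain (R : pzRingType) (X Y : rmodType R) : Prop :=
  subinjective X Y.

Definition injective_module (R : pzRingType) (E : rmodType R) : Prop :=
  forall (A B : rmodType R) (i : {linear A -> B}) (f : {linear A -> E}),
    injective i ->
    exists g : {linear B -> E}, forall a : A, g (i a) = f a.

Definition projective_module (R : pzRingType) (E : rmodType R) : Prop :=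
  forall (B C : rmodType R) (p : {linear B -> C}) (f : {linear E -> C}),
    (forall c : C, exists b : B, p b = c) ->
    exists g : {linear E -> B}, forall e : E, p (g e) = f e.

Definition short_exact (R : pzRingType) (A B C : rmodType R)
    (f : {linear A -> B}) (g : {linear B -> C}) : Prop :=
  [/\ injective f,
      (forall c : C, exists b : B, g b = c) &
      (forall b : B, g b = 0 <-> exists a : A, f a = b)].

(* Since E is injective, Y is
   M-subinjective as soon as every map M -> Y extends to E.  Given h : M -> B,
   extend g h to E -> C, lift that to psi : E -> B by projectivity; then
   h - psi j lands in ker g = im f, so it is f alpha for some alpha : M -> A,
   and extending alpha to beta : E -> A gives the extension psi + f beta. *)
From HB Require Import structures.
From mathcomp Require Import all_boot all_order all_algebra.
Set Implicit Arguments. Unset Strict Implicit. Unset Printing Implicit Defensive.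
Import GRing.Theory.
Local Open Scope ring_scope.

Lemma short_exact_factor (R : pzRingType) (M A B C : rmodType R) (f : {linear A -> B})
    (g : {linear B -> C}) (h : {linear M -> B}) :
    short_exact f g -> (forall m, g (h m) = 0) ->
  exists alpha : {linear M -> A}, forall m, f (alpha m) = h m.
Proof.
move=> [f_inj _ ker_g] gh0.
have preim m : exists a, f a == h m.
  by have [a fa] := (ker_g (h m)).1 (gh0 m); exists a; apply/eqP.
pose al m := xchoose (preim m).
have alP m : f (al m) = h m by apply/eqP/(xchooseP (preim m)).
have al_lin : linear al by move=> a u v; apply: f_inj; rewrite linearP !alP linearP.
pose alpha : {linear M -> A} := HB.pack al (GRing.isLinear.Build _ _ _ _ al al_lin).
by exists alpha.
Qed.

Section SubinjectiveExtensionReflecting.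

Variables (R : pzRingType) (M E : rmodType R) (j : {linear M -> E}).
Hypothesis j_inj : injective j.

Lemma subinjective_of_extend_to_injective (Y : rmodType R) :
    injective_module E ->
    (forall h : {linear M -> Y}, exists H : {linear E -> Y}, forall m, H (j m) = h m) ->
  subinjective M Y.
Proof.
move=> E_inj extY D i h i_inj.
have [H Hj] := extY h.
have [k ki] := E_inj M D i j i_inj.
by exists (H \o k)%R => m /=; rewrite ki Hj.
Qed.

Lemma extend_middle_along_projective (A B C : rmodType R)
    (f : {linear A -> B}) (g : {linear B -> C}) :
    projective_module E -> short_exact f g ->
    subinjective M A -> subinjective M C ->
  forall h : {linear M -> B}, exists H : {linear E -> B}, forall m, H (j m) = h m.
Proof.
move=> E_proj fg_exact sA sC h.
have [phi phi_j] := sC E j (g \o h)%R j_inj.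
have [_ g_onto _] := fg_exact.
have [psi g_psi] := E_proj B C g phi g_onto.
have [|alpha f_alpha] := @short_exact_factor _ _ _ _ _ f g (h \- (psi \o j))%R fg_exact.
  by move=> m; rewrite raddfB /= g_psi phi_j subrr.
have [beta beta_j] := sA E j alpha j_inj.
exists (psi \+ (f \o beta))%R => m /=.
by rewrite beta_j f_alpha /= addrC subrK.
Qed.

End SubinjectiveExtensionReflecting.

Theorem mainTheorem1 (R : pzRingType) (M E : rmodType R)
    (j : {linear M -> E}) (hj : injective j)
    (hEinj : injective_module E) (hEproj : projective_module E) :
  forall (A B C : rmodType R) (f : {linear A -> B}) (g : {linear B -> C}),
    short_exact f g ->
    in_subinj_domain M A -> in_subinj_domain M C ->
    in_subinj_domain M B.
Proof.
move=> A B C f g fg_exact sA sC.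
have extB := extend_middle_along_projective hj hEproj fg_exact sA sC.
exact: subinjective_of_extend_to_injective hEinj extB.
Qed.
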